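(* Let $f(q):=\sum_{n=0}^{\infty}\frac{q^{n^2}}{(-q;q)_n^2}$. Then the series defining $f(q)$ converges for every $q\in\mathbb{C}$ with $|q|\neq 1$. Moreover, if $0<|q|<1$ and $\chi(q):=(-q;q)_\infty$, then $$f(q)=\sum_{n=0}^{\infty}\frac{q^{n^2}}{(-q;q)_n^2},\qquad f(1/q)=\sum_{n=0}^{\infty}\frac{q^{n}}{(-q;q)_n^2},$$ $$f(q)=\chi(q)^{-2}\sum_{n=0}^{\infty}\left(-q^{n+1};q\right)_\infty^2q^{n^2},\qquad f(1/q)=\chi(q)^{-2}\sum_{n=0}^{\infty}\left(-q^{n+1};q\right)_\infty^2q^{n},$$ $$f(q)=\chi(q)^{-2}\sum_{n=0}^{\infty}q^{n^2}\exp\left[-2\sum_{s=1}^{\infty}\frac{q^s}{s}\sum_{d\mid s,\ d\geq n+1}(-1)^{s/d}d\right],$$ $$f(q)\chi(q)^2=\sum_{n=0}^{\infty}q^{n^2}\exp\left[-2\sum_{s=1}^{\infty}q^s\sum_{0<d\mid s,\ d\leq s/(n+1)}\frac{(-1)^d}{d}\right],$$ $$f(1/q)\chi(q)^2=\sum_{n=0}^{\infty}q^{n}\exp\left[-2\sum_{s=1}^{\infty}q^s\sum_{0<d\mid s,\ d\leq s/(n+1)}\frac{(-1)^d}{d}\right].$$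
   Context: The $q$-Pochhammer symbol is $(a;q)_n:=\prod_{j=1}^{n}(1-aq^{j-1})$ for $n\geq1$, $(a;q)_0:=1$, and $(a;q)_\infty:=\prod_{j=1}^\infty(1-aq^{j-1})$ for $|q|<1$. Divisors $d$ in the inner sums are positive integers. *)

From Stdlib Require Export Reals Arith.
From Coquelicot Require Export Coquelicot.
Open Scope C_scope.

Definition cpow (z : C) (n : nat) : C := pow_n z n.

Fixpoint qpoch (a q : C) (n : nat) : C :=
  match n with
  | O => 1
  | S m => qpoch a q m * (1 - a * cpow q m)
  end.

Definition CLim (u : nat -> C) : C :=
  (real (Lim_seq (fun n => Re (u n))), real (Lim_seq (fun n => Im (u n)))).
Definition CSeries (a : nat -> C) : C := CLim (sum_n a).

Definition qpoch_inf (a q : C) : C := CLim (qpoch a q).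

Definition cexp (z : C) : C := CSeries (fun k => cpow z k / RtoC (INR (fact k))).

Definition f_term (q : C) (n : nat) : C := cpow q (n * n)%nat / (qpoch (- q) q n * qpoch (- q) q n).
Definition fser (q : C) : C := CSeries (f_term q).

Definition chi (q : C) : C := qpoch_inf (- q) q.

Definition divsum (s : nat) (P : nat -> bool) (g : nat -> R) : R :=
  sum_n (fun d => if andb (andb (Nat.ltb 0 d) (Nat.eqb (s mod d) 0)) (P d) then g d else 0%R) s.

Definition A1 (n s : nat) : R :=
  divsum s (fun d => Nat.leb (S n)%nat d) (fun d => ((-1) ^ (s / d) * INR d)%R).

(* sum_{0 < d | s, d <= s/(n+1)} (-1)^d / d   (condition d*(n+1) <= s) *)
Definition A2 (n s : nat) : R :=
  divsum s (fun d => Nat.leb (d * S n) s) (fun d => ((-1) ^ d / INR d)%R).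

(* For |q| < 1 every factor of (-q;q)_n satisfies |1 + q^k| >= 1 - |q|^k >= exp (-|q|^k / (1-|q|)),
   so |(-q;q)_n| is bounded below uniformly in n and the terms of f decay geometrically.  For
   |q| > 1 the identity (-1/q;1/q)_n = q^(-n(n+1)/2) (-q;q)_n turns the terms of f(q) into
   p^n / (-p;p)_n^2 with p = 1/q.  The chi-forms follow from chi(q) = (-q;q)_n (-q^(n+1);q)_oo.

   For the exponential forms, log (-q^(n+1);q)_oo = sum_(j>n) log (1 + q^j)
   = sum_(j>n) sum_(K>=1) (-1)^(K-1) q^(jK) / K; grouping the terms by s = jK gives
   - sum_s (q^s/s) sum_(d|s, d>n) (-1)^(s/d) d, and the involution d <-> s/d rewrites the inner
   sum as s sum_(d|s, d<=s/(n+1)) (-1)^d / d.  The complex exponential and logarithm are their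
   power series; the identities exp = e^Re (cos + i sin) and exp (log (1 + w)) = 1 + w are proved
   by showing that a suitable function of a real parameter t in [0,1] has derivative 0. *)

From Stdlib Require Import Lra Lia FunctionalExtensionality.
Open Scope C_scope.

Lemma cpow_Cpow (z : C) (k : nat) : cpow z k = z ^ k.
Proof. induction k as [|k IH]; [reflexivity|]. now rewrite Cpow_S, <- IH. Qed.

Lemma RtoC_neq0 (x : R) : x <> 0%R -> RtoC x <> 0.
Proof. intros Hx E. apply Hx. exact (f_equal Re E). Qed.

(** * Complex sequences and series *)

Definition is_lim_Cseq (u : nat -> C) (l : C) : Prop := filterlim u eventually (locally l).

Lemma is_lim_Cseq_components (u : nat -> C) (l : C) :
  is_lim_Cseq u l <->
  is_lim_seq (fun n => Re (u n)) (Re l) /\ is_lim_seq (fun n => Im (u n)) (Im l).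
Proof.
  unfold is_lim_Cseq. split.
  - intro H. split; apply filterlim_locally; intro eps;
      generalize (proj1 (filterlim_locally _ _) H eps); apply filter_imp; now intros x [B1 B2].
  - intros [H1 H2]. apply filterlim_locally; intro eps.
    generalize (filter_and _ _ (proj1 (filterlim_locally _ _) H1 eps)
                  (proj1 (filterlim_locally _ _) H2 eps)).
    apply filter_imp. now intros x [B1 B2].
Qed.

Lemma CLim_unique (u : nat -> C) (l : C) : is_lim_Cseq u l -> CLim u = l.
Proof.
  intro H. apply is_lim_Cseq_components in H as [H1 H2]. unfold CLim.
  rewrite (is_lim_seq_unique _ _ H1), (is_lim_seq_unique _ _ H2). now destruct l.
Qed.

Lemma CSeries_unique (a : nat -> C) (l : C) : is_series a l -> CSeries a = l.
Proof. apply CLim_unique. Qed.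

Lemma CSeries_correct (a : nat -> C) : ex_series a -> is_series a (CSeries a).
Proof. intros [l H]. now rewrite (CSeries_unique _ _ H). Qed.

Lemma CSeries_components (a : nat -> C) :
  CSeries a = (Series (fun k => Re (a k)), Series (fun k => Im (a k))).
Proof.
  assert (Hsum : forall n, sum_n a n = (sum_n (fun k => Re (a k)) n, sum_n (fun k => Im (a k)) n)).
  { induction n as [|n IH]; [now rewrite !sum_O; destruct (a 0%nat)|].
    rewrite !sum_Sn, IH. now destruct (a (S n)). }
  unfold CSeries, CLim, Series. f_equal; f_equal; apply Lim_seq_ext; intro n; now rewrite Hsum.
Qed.

Lemma is_series_Cscal (w : C) (a : nat -> C) (l : C) :
  is_series a l -> is_series (fun k => w * a k) (w * l).
Proof. apply (is_series_scal (K := C_AbsRing) (V := C_NormedModule)). Qed.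

Lemma CSeries_Cscal (w : C) (a : nat -> C) :
  ex_series a -> CSeries (fun k => w * a k) = w * CSeries a.
Proof. intro H. apply CSeries_unique, is_series_Cscal, CSeries_correct, H. Qed.

Lemma is_lim_Cseq_bound (u : nat -> C) (l : C) (e : nat -> R) :
  (forall n, Cmod (u n - l) <= e n)%R -> is_lim_seq e 0%R -> is_lim_Cseq u l.
Proof.
  intros Hue He. apply (filterlim_locally_ball_norm (K := C_AbsRing) (U := C_NormedModule)).
  intro eps. apply is_lim_seq_spec in He. generalize (He eps). apply filter_imp.
  intros n Hn. rewrite Rminus_0_r in Hn. pose proof (Hue n). unfold ball_norm.
  change (Cmod (u n - l) < eps)%R. pose proof (Rle_abs (e n)). lra.
Qed.

Lemma is_lim_Cseq_ext (u v : nat -> C) (l : C) :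
  (forall n, u n = v n) -> is_lim_Cseq u l -> is_lim_Cseq v l.
Proof. intro H. apply filterlim_ext, H. Qed.

Lemma is_lim_Cseq_plus (u v : nat -> C) (a b : C) :
  is_lim_Cseq u a -> is_lim_Cseq v b -> is_lim_Cseq (fun n => u n + v n) (a + b).
Proof.
  intros Hu Hv. apply (filterlim_comp_2 _ _ Cplus Hu Hv),
    (filterlim_plus (K := C_AbsRing) (V := C_NormedModule)).
Qed.

Lemma is_lim_Cseq_opp (u : nat -> C) (a : C) :
  is_lim_Cseq u a -> is_lim_Cseq (fun n => - u n) (- a).
Proof.
  intro Hu. apply (filterlim_comp _ _ _ u Copp _ _ _ Hu),
    (filterlim_opp (K := C_AbsRing) (V := C_NormedModule)).
Qed.

Lemma is_lim_Cseq_mult (u v : nat -> C) (a b : C) :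
  is_lim_Cseq u a -> is_lim_Cseq v b -> is_lim_Cseq (fun n => u n * v n) (a * b).
Proof.
  rewrite !is_lim_Cseq_components. intros [U1 U2] [V1 V2]. split; simpl.
  - apply is_lim_seq_minus'; now apply is_lim_seq_mult'.
  - apply is_lim_seq_plus'; now apply is_lim_seq_mult'.
Qed.

Lemma is_lim_Cseq_const (c : C) : is_lim_Cseq (fun _ => c) c.
Proof. apply filterlim_const. Qed.

Lemma is_lim_Cseq_incr_n (u : nat -> C) (l : C) (N : nat) :
  is_lim_Cseq u l -> is_lim_Cseq (fun n => u (n + N)%nat) l.
Proof.
  rewrite !is_lim_Cseq_components. intros [H1 H2].
  split; now apply (is_lim_seq_incr_n (fun n => _ (u n)) N).
Qed.

Lemma is_lim_Cseq_unique (u : nat -> C) (a b : C) : is_lim_Cseq u a -> is_lim_Cseq u b -> a = b.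
Proof. intros Ha Hb. now rewrite <- (CLim_unique _ _ Ha), (CLim_unique _ _ Hb). Qed.

Lemma is_lim_Cseq_le (u : nat -> C) (l a : C) (B : R) (M : nat) :
  is_lim_Cseq u l -> (forall N, (M <= N)%nat -> Cmod (u N - a) <= B)%R -> (Cmod (l - a) <= B)%R.
Proof.
  intros Hu HB.
  assert (Hlim : is_lim_seq (fun N => Cmod (u N - a)) (Cmod (l - a))).
  { apply (filterlim_comp _ _ _ (fun N => u N - a) Cmod _ (locally (l - a))).
    - apply is_lim_Cseq_plus, is_lim_Cseq_const. exact Hu.
    - apply (filterlim_norm (K := C_AbsRing) (V := C_NormedModule)). }
  apply (is_lim_seq_le_loc _ (fun _ => B) _ _ (ex_intro _ M HB) Hlim (is_lim_seq_const B)).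
Qed.

(** * Complex functions of a real variable *)

Definition is_Cderive (f : R -> C) (x : R) (l : C) : Prop :=
  derivable_pt_lim (fun t => Re (f t)) x (Re l) /\
  derivable_pt_lim (fun t => Im (f t)) x (Im l).

Lemma is_Cderive_eq (f : R -> C) (x : R) (l l' : C) :
  is_Cderive f x l -> l = l' -> is_Cderive f x l'.
Proof. now intros H <-. Qed.

Lemma derivable_pt_lim_eq (f : R -> R) (x l l' : R) :
  derivable_pt_lim f x l -> l = l' -> derivable_pt_lim f x l'.
Proof. now intros H <-. Qed.

Lemma is_Cderive_mult (f g : R -> C) (x : R) (df dg : C) :
  is_Cderive f x df -> is_Cderive g x dg ->
  is_Cderive (fun t => f t * g t) x (df * g x + f x * dg).
Proof.
  unfold is_Cderive, Re, Im. intros [F1 F2] [G1 G2]. split; simpl.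
  - pose proof (derivable_pt_lim_minus _ _ _ _ _ (derivable_pt_lim_mult _ _ _ _ _ F1 G1)
      (derivable_pt_lim_mult _ _ _ _ _ F2 G2)) as K.
    unfold minus_fct, mult_fct in K. eapply derivable_pt_lim_eq; [exact K | simpl; ring].
  - pose proof (derivable_pt_lim_plus _ _ _ _ _ (derivable_pt_lim_mult _ _ _ _ _ F1 G2)
      (derivable_pt_lim_mult _ _ _ _ _ F2 G1)) as K.
    unfold plus_fct, mult_fct in K. eapply derivable_pt_lim_eq; [exact K | simpl; ring].
Qed.

Lemma is_Cderive_affine (a b : C) (x : R) : is_Cderive (fun t => a + RtoC t * b) x b.
Proof.
  assert (Haff : forall a b : R, derivable_pt_lim (fun t => a + t * b)%R x b).
  { intros a' b'. pose proof (derivable_pt_lim_plus _ _ _ _ _ (derivable_pt_lim_const a' x)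
      (derivable_pt_lim_mult _ _ _ _ _ (derivable_pt_lim_id x) (derivable_pt_lim_const b' x))) as K.
    unfold plus_fct, mult_fct, id, fct_cte in K. eapply derivable_pt_lim_eq; [exact K | ring]. }
  unfold is_Cderive, Re, Im. split; simpl.
  - apply (derivable_pt_lim_ext (fun t => fst a + t * fst b)%R); [intro t; simpl; ring | apply Haff].
  - apply (derivable_pt_lim_ext (fun t => snd a + t * snd b)%R); [intro t; simpl; ring | apply Haff].
Qed.

Lemma is_Cderive_opp (f : R -> C) (x : R) (l : C) :
  is_Cderive f x l -> is_Cderive (fun t => - f t) x (- l).
Proof. intros [F1 F2]. split; apply derivable_pt_lim_opp; assumption. Qed.

Lemma is_Cderive_0_eq (f : R -> C) (a b : R) :
  (a < b)%R -> (forall t, (a <= t <= b)%R -> is_Cderive f t 0) -> f a = f b.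
Proof.
  intros Hab H.
  assert (ERe : Re (f a) = Re (f b)).
  { apply (eq_is_derive (fun t => Re (f t))); [|exact Hab].
    intros t Ht. apply is_derive_Reals, (H t Ht). }
  assert (EIm : Im (f a) = Im (f b)).
  { apply (eq_is_derive (fun t => Im (f t))); [|exact Hab].
    intros t Ht. apply is_derive_Reals, (H t Ht). }
  destruct (f a), (f b). simpl in *. now subst.
Qed.

Definition cpolar (z : C) : C := (exp (Re z) * cos (Im z), exp (Re z) * sin (Im z))%R.

Lemma cpolar_plus (a b : C) : cpolar (a + b) = cpolar a * cpolar b.
Proof.
  unfold cpolar. destruct a as [a1 a2], b as [b1 b2]. simpl.
  rewrite exp_plus, cos_plus, sin_plus. apply injective_projections; simpl; ring.
Qed.

Lemma cpolar_0 : cpolar 0 = 1.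
Proof.
  unfold cpolar. simpl. rewrite exp_0, cos_0, sin_0. apply injective_projections; simpl; ring.
Qed.

Lemma cpolar_opp_r (z : C) : cpolar z * cpolar (- z) = 1.
Proof. rewrite <- cpolar_plus, Cplus_opp_r. apply cpolar_0. Qed.

Lemma is_Cderive_cpolar (u : R -> C) (x : R) (l : C) :
  is_Cderive u x l -> is_Cderive (fun t => cpolar (u t)) x (cpolar (u x) * l).
Proof.
  unfold is_Cderive, cpolar, Re, Im. intros [U1 U2]. split; simpl.
  - pose proof (derivable_pt_lim_mult _ _ _ _ _
      (derivable_pt_lim_comp _ _ _ _ _ U1 (derivable_pt_lim_exp (fst (u x))))
      (derivable_pt_lim_comp _ _ _ _ _ U2 (derivable_pt_lim_cos (snd (u x))))) as K.
    unfold mult_fct, comp in K. eapply derivable_pt_lim_eq; [exact K | simpl; ring].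
  - pose proof (derivable_pt_lim_mult _ _ _ _ _
      (derivable_pt_lim_comp _ _ _ _ _ U1 (derivable_pt_lim_exp (fst (u x))))
      (derivable_pt_lim_comp _ _ _ _ _ U2 (derivable_pt_lim_sin (snd (u x))))) as K.
    unfold mult_fct, comp in K. eapply derivable_pt_lim_eq; [exact K | simpl; ring].
Qed.

Lemma is_lim_Cseq_cpolar (u : nat -> C) (l : C) :
  is_lim_Cseq u l -> is_lim_Cseq (fun n => cpolar (u n)) (cpolar l).
Proof.
  assert (Hcont : forall (f : R -> R) (v : nat -> R) (a : R), (forall x, derivable_pt f x) ->
            is_lim_seq v a -> is_lim_seq (fun n => f (v n)) (f a))
    by (intros f v a Hf Hv;
        apply is_lim_seq_continuous; [apply derivable_continuous_pt, Hf | exact Hv]).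
  rewrite !is_lim_Cseq_components. intros [H1 H2]. unfold cpolar. simpl.
  split; apply is_lim_seq_mult'; apply Hcont;
    auto using derivable_pt_exp, derivable_pt_cos, derivable_pt_sin.
Qed.

Definition CPSeries (c : nat -> C) (t : R) : C := CSeries (fun k => RtoC (t ^ k) * c k).

Lemma CPSeries_components (c : nat -> C) (t : R) :
  CPSeries c t = (PSeries (fun k => Re (c k)) t, PSeries (fun k => Im (c k)) t).
Proof.
  unfold CPSeries, PSeries. rewrite CSeries_components.
  f_equal; apply Series_ext; intro k; unfold Re, Im; simpl; ring.
Qed.

Lemma CPSeries_0 (c : nat -> C) : CPSeries c 0 = c O.
Proof.
  rewrite CPSeries_components, !PSeries_0. now destruct (c O).
Qed.

Section BoundedCoefficients.

Variables (c : nat -> C) (r M : R).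
Hypothesis Hbound : forall k, (Cmod (c k) * r ^ k <= M)%R.

Lemma ex_series_CPSeries (t : R) : (Rabs t < r)%R -> ex_series (fun k => RtoC (t ^ k) * c k).
Proof.
  intro Ht. assert (Hr : (0 < r)%R) by (pose proof (Rabs_pos t); lra).
  apply (ex_series_le (K := C_AbsRing) (V := C_CompleteNormedModule) _
           (fun k => M * (Rabs t / r) ^ k)%R).
  - intro k. change norm with Cmod. rewrite Cmod_mult, Cmod_R, <- RPow_abs.
    replace (M * (Rabs t / r) ^ k)%R with (M / r ^ k * Rabs t ^ k)%R
      by (unfold Rdiv; rewrite Rpow_mult_distr, pow_inv; ring).
    rewrite Rmult_comm. apply Rmult_le_compat_r; [apply pow_le, Rabs_pos|].
    apply Rmult_le_reg_r with (r ^ k)%R; [now apply pow_lt|].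
    unfold Rdiv. rewrite Rmult_assoc, Rinv_l, Rmult_1_r by (apply pow_nonzero; lra).
    apply Hbound.
  - apply (ex_series_scal_l (K := R_AbsRing) (V := R_NormedModule)).
    exists (/ (1 - Rabs t / r))%R. apply is_series_geom.
    rewrite Rabs_pos_eq; [|apply Rmult_le_pos; [apply Rabs_pos | left; now apply Rinv_0_lt_compat]].
    apply Rmult_lt_reg_r with r; [exact Hr|]. unfold Rdiv. rewrite Rmult_assoc, Rinv_l; lra.
Qed.

Lemma is_Cderive_CPSeries (x : R) : (Rabs x < r)%R ->
  is_Cderive (CPSeries c) x (CPSeries (fun k => RtoC (INR (S k)) * c (S k)) x).
Proof.
  intro Hx. assert (Hr : (0 <= r)%R) by (pose proof (Rabs_pos x); lra).
  assert (Hderiv : forall a : nat -> R, (forall k, Rabs (a k) <= Cmod (c k))%R ->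
            derivable_pt_lim (PSeries a) x (PSeries (PS_derive a) x)).
  { intros a Ha. apply is_derive_Reals, is_derive_PSeries.
    apply (Rbar_lt_le_trans _ r); [exact Hx|].
    apply (proj1 (CV_radius_bounded a)). exists M. intro k.
    rewrite Rabs_mult, <- RPow_abs, (Rabs_pos_eq r Hr).
    eapply Rle_trans; [|apply Hbound]. apply Rmult_le_compat_r; [now apply pow_le | apply Ha]. }
  split.
  - apply (derivable_pt_lim_ext (PSeries (fun k => Re (c k))));
      [intro t; now rewrite CPSeries_components|].
    rewrite CPSeries_components. simpl.
    replace (PSeries _ x) with (PSeries (PS_derive (fun k => Re (c k))) x)
      by (apply PSeries_ext; intro k; unfold PS_derive, Re; simpl; ring).
    apply Hderiv. intro k. eapply Rle_trans; [apply Rmax_l | apply Rmax_Cmod].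
  - apply (derivable_pt_lim_ext (PSeries (fun k => Im (c k))));
      [intro t; now rewrite CPSeries_components|].
    rewrite CPSeries_components. simpl.
    replace (PSeries _ x) with (PSeries (PS_derive (fun k => Im (c k))) x)
      by (apply PSeries_ext; intro k; unfold PS_derive, Im; simpl; ring).
    apply Hderiv. intro k. eapply Rle_trans; [apply Rmax_r | apply Rmax_Cmod].
Qed.

End BoundedCoefficients.

(** * The exponential series *)

Definition exp_coef (z : C) (k : nat) : C := z ^ k / RtoC (INR (fact k)).

Lemma exp_coef_bound (z : C) (r : R) (k : nat) :
  (0 <= r)%R -> (Cmod (exp_coef z k) * r ^ k <= exp (Cmod z * r))%R.
Proof.
  intro Hr. unfold exp_coef.
  rewrite Cmod_div, Cmod_pow, Cmod_R, Rabs_pos_eq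
    by (apply pos_INR || apply RtoC_neq0, INR_fact_neq_0).
  replace (Cmod z ^ k / INR (fact k) * r ^ k)%R with ((Cmod z * r) ^ k / INR (fact k))%R
    by (rewrite Rpow_mult_distr; unfold Rdiv; ring).
  assert (Hx : (0 <= Cmod z * r)%R) by (apply Rmult_le_pos; [apply Cmod_ge_0 | exact Hr]).
  eapply Rle_trans; [|apply (exp_ge_taylor _ k Hx)].
  destruct k as [|k]; [simpl; lra|]. rewrite tech5.
  assert (0 <= sum_f_R0 (fun i => (Cmod z * r) ^ i / INR (fact i)) k)%R.
  { apply cond_pos_sum. intro i. apply Rmult_le_pos; [now apply pow_le|].
    left. apply Rinv_0_lt_compat, INR_fact_lt_0. }
  lra.
Qed.

Lemma cexp_CPSeries (z : C) : cexp z = CPSeries (exp_coef z) 1.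
Proof.
  unfold cexp, CPSeries, exp_coef. f_equal. apply functional_extensionality. intro k.
  rewrite pow1, cpow_Cpow. ring.
Qed.

Lemma is_Cderive_exp_coef (z : C) (t : R) :
  is_Cderive (CPSeries (exp_coef z)) t (z * CPSeries (exp_coef z) t).
Proof.
  set (r := (Rabs t + 1)%R).
  assert (Hbound : forall k, (Cmod (exp_coef z k) * r ^ k <= exp (Cmod z * r))%R)
    by (intro k; apply exp_coef_bound; unfold r; pose proof (Rabs_pos t); lra).
  assert (Ht : (Rabs t < r)%R) by (unfold r; lra).
  eapply is_Cderive_eq; [exact (is_Cderive_CPSeries _ _ _ Hbound t Ht)|].
  unfold CPSeries. rewrite <- CSeries_Cscal by exact (ex_series_CPSeries _ _ _ Hbound t Ht).
  f_equal. apply functional_extensionality. intro k. unfold exp_coef.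
  assert (INR (fact k) <> 0%R) by apply INR_fact_neq_0.
  assert (INR (S k) <> 0%R) by (apply not_0_INR; lia).
  rewrite Cpow_S, fact_simpl, mult_INR, RtoC_mult. field. split; now apply RtoC_neq0.
Qed.

Lemma cexp_cpolar (z : C) : cexp z = cpolar z.
Proof.
  set (H := fun t => CPSeries (exp_coef z) t * cpolar (0 + RtoC t * - z)).
  assert (HD : forall t, (0 <= t <= 1)%R -> is_Cderive H t 0).
  { intros t _. eapply is_Cderive_eq.
    - apply is_Cderive_mult; [apply is_Cderive_exp_coef|].
      apply is_Cderive_cpolar, is_Cderive_affine.
    - cbv beta. ring. }
  assert (E : H 0%R = H 1%R) by (apply is_Cderive_0_eq; [lra | exact HD]).
  unfold H in E. rewrite CPSeries_0, <- cexp_CPSeries in E.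
  replace (0 + RtoC 0 * - z) with (RtoC 0) in E by ring.
  replace (0 + RtoC 1 * - z) with (- z) in E by ring.
  rewrite cpolar_0 in E. unfold exp_coef in E. simpl in E.
  transitivity (cexp z * cpolar (- z) * cpolar z).
  - rewrite <- Cmult_assoc, (Cmult_comm (cpolar (- z))), cpolar_opp_r. ring.
  - rewrite <- E. field.
Qed.

Lemma cexp_plus (a b : C) : cexp (a + b) = cexp a * cexp b.
Proof. rewrite !cexp_cpolar. apply cpolar_plus. Qed.

Lemma cexp_0 : cexp 0 = 1.
Proof. rewrite cexp_cpolar. apply cpolar_0. Qed.

(** * The logarithm series *)

Lemma is_series_Cgeom (u : C) : (Cmod u < 1)%R -> is_series (fun k => u ^ k) (/ (1 - u)).
Proof.
  intro Hu.
  assert (Hu1 : 1 - u <> 0).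
  { intro E. replace u with (1 - (1 - u)) in Hu by ring. rewrite E in Hu.
    replace (1 - 0) with (RtoC 1) in Hu by ring. rewrite Cmod_1 in Hu. lra. }
  assert (Hsum : forall n, @eq C (sum_n (fun k => u ^ k) n) ((1 - u ^ S n) / (1 - u))).
  { induction n as [|n IH].
    - rewrite sum_O. simpl. field. exact Hu1.
    - rewrite sum_Sn, IH. change plus with Cplus. rewrite (Cpow_S u (S n)). field. exact Hu1. }
  apply (is_lim_Cseq_bound _ _ (fun n => Cmod u ^ S n * / Cmod (1 - u))%R).
  - intro n. rewrite Hsum. right.
    replace ((1 - u ^ S n) / (1 - u) - / (1 - u)) with (- (u ^ S n / (1 - u))) by (field; exact Hu1).
    now rewrite Cmod_opp, Cmod_div, Cmod_pow.
  - apply (is_lim_seq_incr_1 (fun n => Cmod u ^ n * / Cmod (1 - u))%R).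
    replace (Finite 0) with (Rbar_mult 0%R (/ Cmod (1 - u))%R) by (simpl; f_equal; ring).
    apply is_lim_seq_scal_r, is_lim_seq_geom. rewrite Rabs_pos_eq; [exact Hu | apply Cmod_ge_0].
Qed.

Lemma Cplus_1_neq0 (u : C) : (Cmod u < 1)%R -> 1 + u <> 0.
Proof.
  intros Hu E. replace u with (Copp 1) in Hu by (replace u with ((1 + u) - 1) by ring; rewrite E; ring).
  rewrite Cmod_opp, Cmod_1 in Hu. lra.
Qed.

Definition log1p_coef (k : nat) : C :=
  match k with O => 0 | S k => RtoC ((-1) ^ k / INR (S k)) end.

Definition clog1p (w : C) : C := CSeries (fun k => log1p_coef k * w ^ k).

Definition clog1p_sum (w : C) (M : nat) : C := sum_n (fun k => log1p_coef k * w ^ k) M.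

Lemma Cmod_log1p_coef (k : nat) : (Cmod (log1p_coef k) <= 1)%R.
Proof.
  destruct k as [|k]; cbn [log1p_coef]; [rewrite Cmod_0; lra|].
  rewrite Cmod_R. unfold Rdiv.
  rewrite Rabs_mult, pow_1_abs, Rabs_inv, Rabs_pos_eq, Rmult_1_l by apply pos_INR.
  rewrite <- Rinv_1. apply Rinv_le_contravar; [lra|]. rewrite S_INR. pose proof (pos_INR k). lra.
Qed.

Lemma Cmod_clog1p_term (w : C) (k : nat) : (Cmod (log1p_coef k * w ^ k) <= Cmod w ^ k)%R.
Proof.
  rewrite Cmod_mult, Cmod_pow. pose proof (Cmod_log1p_coef k). pose proof (Cmod_ge_0 (log1p_coef k)).
  pose proof (pow_le (Cmod w) k (Cmod_ge_0 w)). nra.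
Qed.

Lemma ex_series_clog1p (w : C) : (Cmod w < 1)%R -> ex_series (fun k => log1p_coef k * w ^ k).
Proof.
  intro Hw.
  apply (ex_series_le (K := C_AbsRing) (V := C_CompleteNormedModule) _ (fun k => Cmod w ^ k)%R).
  - apply Cmod_clog1p_term.
  - exists (/ (1 - Cmod w))%R. apply is_series_geom. rewrite Rabs_pos_eq; [exact Hw | apply Cmod_ge_0].
Qed.

Lemma clog1p_sum_tail (w : C) (M : nat) : (Cmod w < 1)%R ->
  (Cmod (clog1p w - clog1p_sum w M) <= Cmod w ^ S M / (1 - Cmod w))%R.
Proof.
  intro Hw. set (x := Cmod w) in *. assert (Hx : (0 <= x)%R) by apply Cmod_ge_0.
  apply (is_lim_Cseq_le _ _ _ _ M (CSeries_correct _ (ex_series_clog1p w Hw))).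
  intros N HN. replace N with (M + (N - M))%nat by lia. generalize (N - M)%nat as p. intro p.
  assert (Hp : (Cmod (clog1p_sum w (M + p) - clog1p_sum w M) <= x ^ S M * (1 - x ^ p) / (1 - x))%R).
  { induction p as [|p IH].
    - rewrite Nat.add_0_r. replace (clog1p_sum w M - clog1p_sum w M) with (RtoC 0) by ring.
      rewrite Cmod_0. simpl. right. field. lra.
    - replace (M + S p)%nat with (S (M + p)) by lia. unfold clog1p_sum at 1. rewrite sum_Sn.
      change plus with Cplus. fold (clog1p_sum w (M + p)).
      replace (clog1p_sum w (M + p) + log1p_coef (S (M + p)) * w ^ S (M + p) - clog1p_sum w M)
        with ((clog1p_sum w (M + p) - clog1p_sum w M) + log1p_coef (S (M + p)) * w ^ S (M + p))
        by ring.
      eapply Rle_trans; [apply Cmod_triangle|].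
      eapply Rle_trans; [apply Rplus_le_compat; [exact IH | apply Cmod_clog1p_term]|].
      fold x. right. replace (S (M + p)) with (S M + p)%nat by lia. rewrite pow_add. simpl.
      field. lra. }
  eapply Rle_trans; [exact Hp|].
  unfold Rdiv. apply Rmult_le_compat_r; [left; apply Rinv_0_lt_compat; lra|].
  pose proof (pow_le x (S M) Hx). assert (0 <= x ^ p)%R by (apply pow_le; exact Hx). nra.
Qed.

Lemma is_Cderive_clog1p_ray (w : C) (t : R) : (Cmod w < 1)%R -> (0 <= t <= 1)%R ->
  is_Cderive (CPSeries (fun k => log1p_coef k * w ^ k)) t (w / (1 + RtoC t * w)).
Proof.
  intros Hw Ht. pose proof (Cmod_ge_0 w).
  set (r := (2 / (1 + Cmod w))%R).
  assert (Hr1 : (1 < r)%R).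
  { unfold r. apply Rmult_lt_reg_r with (1 + Cmod w)%R; [lra|].
    unfold Rdiv. rewrite Rmult_assoc, Rinv_l; lra. }
  assert (Hwr : (Cmod w * r <= 1)%R).
  { unfold r. apply Rmult_le_reg_r with (1 + Cmod w)%R; [lra|].
    unfold Rdiv. rewrite !Rmult_assoc, Rinv_l; lra. }
  assert (Hbound : forall k, (Cmod (log1p_coef k * w ^ k) * r ^ k <= 1)%R).
  { intro k. eapply Rle_trans; [apply Rmult_le_compat_r; [apply pow_le; lra | apply Cmod_clog1p_term]|].
    rewrite <- Rpow_mult_distr, <- (pow1 k). apply pow_incr. split; [apply Rmult_le_pos|]; lra. }
  assert (Htr : (Rabs t < r)%R) by (rewrite Rabs_pos_eq; lra).
  assert (Hu : (Cmod (- (RtoC t * w)) < 1)%R).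
  { rewrite Cmod_opp, Cmod_mult, Cmod_R, Rabs_pos_eq by lra. nra. }
  eapply is_Cderive_eq; [exact (is_Cderive_CPSeries _ _ _ Hbound t Htr)|].
  replace (w / (1 + RtoC t * w)) with (w * / (1 - - (RtoC t * w)))
    by (unfold Cdiv; f_equal; f_equal; ring).
  rewrite <- (CSeries_unique _ _ (is_series_Cgeom _ Hu)).
  unfold CPSeries. rewrite <- CSeries_Cscal by (eexists; apply is_series_Cgeom, Hu).
  f_equal. apply functional_extensionality. intro k. cbn [log1p_coef].
  assert (INR (S k) <> 0%R) by (apply not_0_INR; lia).
  replace (- (RtoC t * w)) with (RtoC (- t) * w)
    by (unfold RtoC; apply injective_projections; simpl; ring).
  rewrite Cpow_mult_l, <- RtoC_pow, Cpow_S.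
  replace (- t)%R with (-1 * t)%R by ring. rewrite Rpow_mult_distr.
  unfold Rdiv. rewrite !RtoC_mult, RtoC_inv. field. all: first [now apply RtoC_neq0 | assumption].
Qed.

Lemma cexp_clog1p (w : C) : (Cmod w < 1)%R -> cexp (clog1p w) = 1 + w.
Proof.
  intro Hw.
  set (L := CPSeries (fun k => log1p_coef k * w ^ k)).
  set (g := fun t : R => cpolar (- L t) * (1 + RtoC t * w)).
  assert (Hg : forall t, (0 <= t <= 1)%R -> is_Cderive g t 0).
  { intros t Ht.
    assert (Hn : 1 + RtoC t * w <> 0).
    { apply Cplus_1_neq0. rewrite Cmod_mult, Cmod_R, Rabs_pos_eq by lra.
      pose proof (Cmod_ge_0 w). nra. }
    eapply is_Cderive_eq.
    - apply is_Cderive_mult; [|apply is_Cderive_affine].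
      apply is_Cderive_cpolar, is_Cderive_opp, is_Cderive_clog1p_ray; assumption.
    - cbv beta. field. exact Hn. }
  assert (E : g 0%R = g 1%R) by (apply is_Cderive_0_eq; [lra | exact Hg]).
  assert (L1 : L 1%R = clog1p w).
  { unfold L, CPSeries, clog1p. f_equal. apply functional_extensionality. intro k. rewrite pow1. ring. }
  unfold g in E. rewrite L1 in E. unfold L in E. rewrite CPSeries_0 in E. cbn [log1p_coef] in E.
  replace (- (0 * w ^ 0)) with (RtoC 0) in E by ring. rewrite cpolar_0 in E.
  rewrite cexp_cpolar.
  transitivity (cpolar (clog1p w) * (cpolar (- clog1p w) * (1 + RtoC 1 * w))).
  - rewrite <- E. ring.
  - rewrite Cmult_assoc, cpolar_opp_r. ring.
Qed.

(** * Finite sums and divisor sums *)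

Fixpoint csum (f : nat -> C) (m : nat) : C :=
  match m with O => 0 | S m => csum f m + f m end.

Lemma sum_n_csum (f : nat -> C) (N : nat) : sum_n f N = csum f (S N).
Proof.
  induction N as [|N IH]; [rewrite sum_O; simpl; ring|].
  now rewrite sum_Sn, IH.
Qed.

Lemma csum_ext (f g : nat -> C) (m : nat) :
  (forall i, (i < m)%nat -> f i = g i) -> csum f m = csum g m.
Proof. induction m as [|m IH]; intro H; simpl; [reflexivity|]. rewrite IH, H; auto. Qed.

Lemma csum_plus (f g : nat -> C) (m : nat) : csum (fun i => f i + g i) m = csum f m + csum g m.
Proof. induction m as [|m IH]; simpl; [ring|]. rewrite IH. ring. Qed.

Lemma csum_opp (f : nat -> C) (m : nat) : csum (fun i => - f i) m = - csum f m.
Proof. induction m as [|m IH]; simpl; [ring|]. rewrite IH. ring. Qed.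

Lemma csum_minus (f g : nat -> C) (m : nat) : csum (fun i => f i - g i) m = csum f m - csum g m.
Proof. induction m as [|m IH]; simpl; [ring|]. rewrite IH. ring. Qed.

Lemma Cmod_csum_le (f : nat -> C) (m : nat) (B : R) :
  (forall i, (i < m)%nat -> Cmod (f i) <= B)%R -> (Cmod (csum f m) <= INR m * B)%R.
Proof.
  induction m as [|m IH]; intro H; cbn [csum]; [rewrite Cmod_0; simpl; lra|].
  eapply Rle_trans; [apply Cmod_triangle|]. rewrite S_INR.
  pose proof (IH (fun i Hi => H i ltac:(lia))). pose proof (H m ltac:(lia)). lra.
Qed.

Lemma csum_from (X : nat -> C) (n m : nat) :
  csum (fun j => if Nat.leb (S n) j then X j else 0) (S (n + m))
  = csum (fun i => X (S n + i)%nat) m.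
Proof.
  induction m as [|m IH].
  - rewrite Nat.add_0_r. transitivity (csum (fun _ => 0) (S n)).
    + apply csum_ext. intros i Hi. destruct (Nat.leb_spec (S n) i); [lia | reflexivity].
    + change (csum (fun i => X (S n + i)%nat) 0) with (RtoC 0). generalize (S n). intro k.
      induction k as [|k IH]; simpl; [reflexivity|]. rewrite IH. ring.
  - replace (S (n + S m)) with (S (S (n + m))) by lia. cbn [csum] in *. rewrite IH.
    destruct (Nat.leb_spec (S n) (S (n + m))); [|lia]. now replace (S n + m)%nat with (S (n + m)).
Qed.

Lemma Nat_div_succ_l (N j : nat) : (0 < j)%nat ->
  (S N / j = if Nat.eqb (S N mod j) 0 then S (N / j) else N / j)%nat.
Proof.
  intro Hj. pose proof (Nat.div_mod N j ltac:(lia)). pose proof (Nat.mod_upper_bound N j ltac:(lia)).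
  set (a := (N / j)%nat) in *. set (b := (N mod j)%nat) in *.
  destruct (Nat.eq_dec (S b) j) as [Hb|Hb].
  - replace (S N) with (S a * j)%nat by lia.
    rewrite Nat.Div0.mod_mul, Nat.div_mul by lia. reflexivity.
  - assert (Hmod : (S N mod j = S b)%nat) by (symmetry; apply (Nat.mod_unique _ _ a); lia).
    assert (Hdiv : (S N / j = a)%nat) by (symmetry; apply (Nat.div_unique _ _ _ (S b)); lia).
    now rewrite Hmod, Hdiv.
Qed.

Definition divisor_term (F : nat -> nat -> C) (s d : nat) : C :=
  if andb (Nat.ltb 0 d) (Nat.eqb (s mod d) 0) then F d (s / d)%nat else 0.

Definition multiple_sum (F : nat -> nat -> C) (N j : nat) : C :=
  if Nat.ltb 0 j then sum_n (fun K => if Nat.ltb 0 K then F j K else RtoC 0) (N / j)%nat else 0.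

(* Both sides sum [F j K] over the pairs with [j K <= N]: by [s = j K] on the left,
   by [j] on the right. *)
Lemma sum_divisor_terms (F : nat -> nat -> C) (N : nat) :
  sum_n (fun s => sum_n (divisor_term F s) s) N = csum (multiple_sum F N) (S N).
Proof.
  induction N as [|N IH].
  - rewrite !sum_O. unfold divisor_term, multiple_sum. simpl. ring.
  - rewrite sum_Sn, IH, sum_Sn. change plus with Cplus.
    change (csum (multiple_sum F (S N)) (S (S N)))
      with (csum (multiple_sum F (S N)) (S N) + multiple_sum F (S N) (S N)).
    assert (Hdiag : multiple_sum F (S N) (S N) = divisor_term F (S N) (S N)).
    { unfold multiple_sum, divisor_term. rewrite Nat.Div0.mod_same, Nat.div_same by lia.
      cbn. now rewrite Cplus_0_r, Cplus_0_l. }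
    assert (Hstep : csum (multiple_sum F (S N)) (S N)
                    = csum (fun j => multiple_sum F N j + divisor_term F (S N) j) (S N)).
    { apply csum_ext. intros j Hj. unfold multiple_sum, divisor_term.
      destruct (Nat.ltb_spec 0 j) as [Hj0|Hj0]; cbn [andb]; [|now rewrite Cplus_0_l].
      rewrite (Nat_div_succ_l N j Hj0).
      destruct (Nat.eqb (S N mod j) 0); [now rewrite sum_Sn | now rewrite Cplus_0_r]. }
    rewrite Hdiag, Hstep, csum_plus, <- (sum_n_csum (divisor_term F (S N)) N). apply Cplus_assoc.
Qed.

Section RealDivisorSums.

Local Open Scope R_scope.

Lemma sum_n_indicator (h : nat -> R) (e0 s : nat) :
  sum_n (fun e => if Nat.eqb e e0 then h e else 0) s = if Nat.leb e0 s then h e0 else 0.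
Proof.
  induction s as [|s IH].
  - rewrite sum_O. destruct (Nat.eqb_spec 0 e0), (Nat.leb_spec e0 0); subst; auto; lia.
  - rewrite sum_Sn, IH. change plus with Rplus.
    destruct (Nat.eqb_spec (S s) e0), (Nat.leb_spec e0 s), (Nat.leb_spec e0 (S s));
      subst; try lia; lra.
Qed.

Lemma sum_n_divisor_pair (s d : nat) (h : nat -> R) : (0 < s)%nat ->
  sum_n (fun e => if Nat.eqb (d * e) s then h e else 0) s =
  if andb (Nat.ltb 0 d) (Nat.eqb (s mod d) 0) then h (s / d)%nat else 0.
Proof.
  intro Hs. destruct (andb (Nat.ltb 0 d) (Nat.eqb (s mod d) 0)) eqn:Hd.
  - apply andb_prop in Hd as [Hd0 Hdm]. apply Nat.ltb_lt in Hd0. apply Nat.eqb_eq in Hdm.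
    pose proof (Nat.div_mod s d ltac:(lia)) as Hsd. rewrite Hdm, Nat.add_0_r in Hsd.
    rewrite (sum_n_ext _ (fun e => if Nat.eqb e (s / d) then h e else 0)).
    + rewrite sum_n_indicator. destruct (Nat.leb_spec (s / d) s); [reflexivity|].
      pose proof (Nat.Div0.div_le_upper_bound s d s ltac:(nia)). lia.
    + intro e. destruct (Nat.eqb_spec (d * e) s), (Nat.eqb_spec e (s / d)); try reflexivity; nia.
  - rewrite (sum_n_ext _ (fun _ => 0)), sum_n_const; [apply Rmult_0_r|].
    intro e. destruct (Nat.eqb_spec (d * e) s) as [He|]; [|reflexivity].
    exfalso. revert Hd. apply Bool.not_false_iff_true, andb_true_intro. split.
    + apply Nat.ltb_lt. destruct d; lia.
    + apply Nat.eqb_eq. rewrite <- He, Nat.mul_comm. apply Nat.Div0.mod_mul.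
Qed.

Lemma divsum_complement (s : nat) (P : nat -> bool) (g : nat -> R) : (0 < s)%nat ->
  divsum s P g = divsum s (fun e => P (s / e)%nat) (fun e => g (s / e)%nat).
Proof.
  intro Hs. unfold divsum.
  set (D := fun d e => if Nat.eqb (d * e) s then (if P d then g d else 0) else 0).
  transitivity (sum_n (fun d => sum_n (D d) s) s).
  - apply sum_n_ext. intro d. unfold D. cbv beta. symmetry.
    etransitivity; [exact (sum_n_divisor_pair s d (fun _ => if P d then g d else 0) Hs)|].
    now destruct (andb (Nat.ltb 0 d) (Nat.eqb (s mod d) 0)).
  - rewrite sum_n_switch. apply sum_n_ext. intro e. unfold D. cbv beta.
    transitivity (sum_n (fun d => if Nat.eqb (e * d) s then (if P d then g d else 0) else 0) s).
    + apply sum_n_ext. intro d. now rewrite Nat.mul_comm.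
    + etransitivity; [exact (sum_n_divisor_pair s e (fun d => if P d then g d else 0) Hs)|].
      now destruct (andb (Nat.ltb 0 e) (Nat.eqb (s mod e) 0)).
Qed.

Lemma A1_eq_mul_A2 (n s : nat) : A1 n s = INR s * A2 n s.
Proof.
  destruct (Nat.eq_dec s 0) as [->|Hs]; [unfold A1, A2, divsum; rewrite !sum_O; simpl; ring|].
  unfold A1. rewrite divsum_complement by lia. unfold A2, divsum.
  rewrite <- (sum_n_mult_l (K := R_Ring)). apply sum_n_ext_loc. intros e He.
  match goal with |- ?a = ?b => change (@eq R a b) end.
  change mult with Rmult.
  destruct (Nat.ltb_spec 0 e) as [He0|He0]; [|simpl; ring].
  destruct (Nat.eqb_spec (s mod e) 0) as [Hm|Hm]; [|simpl; ring]. cbn [andb].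
  pose proof (Nat.div_mod s e ltac:(lia)) as Hse. rewrite Hm, Nat.add_0_r in Hse.
  set (K := (s / e)%nat) in *.
  assert (HK : K <> 0%nat) by (intro E; rewrite E in Hse; lia).
  assert (Hsk : (s / K)%nat = e) by (rewrite Hse at 1; apply Nat.div_mul, HK).
  assert (Hle : Nat.leb (S n) K = Nat.leb (e * S n) s)
    by (rewrite Hse; destruct (Nat.leb_spec (S n) K), (Nat.leb_spec (e * S n) (e * K)); auto; nia).
  rewrite Hsk, Hle. destruct (Nat.leb (e * S n) s); [|ring].
  rewrite Hse, mult_INR. field. apply not_0_INR. lia.
Qed.

End RealDivisorSums.

Section RealBounds.

Local Open Scope R_scope.

Lemma Rle_pow_decr (r : R) (a b : nat) : 0 <= r <= 1 -> (a <= b)%nat -> r ^ b <= r ^ a.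
Proof.
  intros Hr Hab. replace b with (a + (b - a))%nat by lia. rewrite pow_add.
  pose proof (pow_le r a (proj1 Hr)).
  assert (r ^ (b - a) <= 1) by (rewrite <- (pow1 (b - a)); apply pow_incr; lra).
  assert (0 <= r ^ (b - a)) by (apply pow_le; lra). nra.
Qed.

Lemma ex_series_succ_pow (r : R) : 0 <= r < 1 -> ex_series (fun s => INR (S s) * r ^ s).
Proof.
  intro Hr. set (r' := (1 + r) / 2).
  assert (Hr' : 0 < r' < 1) by (unfold r'; lra).
  assert (Hpos : forall s, 0 <= INR (S s) * r' ^ s)
    by (intro s; apply Rmult_le_pos; [apply pos_INR | apply pow_le; lra]).
  apply (ex_series_le (K := R_AbsRing) (V := R_CompleteNormedModule) _ (fun s => INR (S s) * r' ^ s)).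
  { intro s. change norm with Rabs.
    rewrite Rabs_pos_eq by (apply Rmult_le_pos; [apply pos_INR | apply pow_le; lra]).
    apply Rmult_le_compat_l; [apply pos_INR|]. apply pow_incr. unfold r'. lra. }
  apply (ex_series_ext (fun s => Rabs (INR (S s) * r' ^ s))); [intro s; apply Rabs_pos_eq, Hpos|].
  apply (ex_series_DAlembert _ r'); [lra| |].
  - intro s. apply Rmult_integral_contrapositive.
    split; [apply not_0_INR; lia | apply pow_nonzero; lra].
  - apply (is_lim_seq_ext (fun s => (1 + / INR (S s)) * r')).
    { intro s. rewrite Rabs_pos_eq.
      - rewrite !S_INR. simpl. assert (r' ^ s <> 0) by (apply pow_nonzero; lra).
        pose proof (pos_INR s). field. repeat split; lra.
      - apply Rmult_le_pos; [apply Hpos|]. left. apply Rinv_0_lt_compat.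
        apply Rmult_lt_0_compat; [apply lt_0_INR; lia | apply pow_lt; lra]. }
    replace (Finite r') with (Rbar_mult (Finite (1 + 0)) r') by (simpl; f_equal; ring).
    apply is_lim_seq_scal_r, is_lim_seq_plus'; [apply is_lim_seq_const|].
    replace (Finite 0) with (Rbar_inv p_infty) by reflexivity.
    apply is_lim_seq_inv; [|discriminate].
    apply (is_lim_seq_incr_1 INR), is_lim_seq_INR.
Qed.

Lemma Rabs_divsum_le (s : nat) (P : nat -> bool) (g : nat -> R) :
  (forall d, (0 < d)%nat -> Rabs (g d) <= 1) -> Rabs (divsum s P g) <= INR (S s).
Proof.
  intro Hg. unfold divsum. generalize s at 1 as t. intro t.
  induction s as [|s IH].
  - rewrite sum_O. simpl. rewrite Rabs_R0. lra.
  - rewrite sum_Sn. change plus with Rplus. eapply Rle_trans; [apply Rabs_triang|].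
    rewrite (S_INR (S s)). apply Rplus_le_compat; [exact IH|].
    destruct (Nat.ltb_spec 0 (S s)); [|lia]. cbn [andb].
    destruct (andb (Nat.eqb (t mod S s) 0) (P (S s))); [apply Hg; lia | rewrite Rabs_R0; lra].
Qed.

Lemma Rabs_A2_le (n s : nat) : Rabs (A2 n s) <= INR (S s).
Proof.
  apply Rabs_divsum_le. intros d Hd. unfold Rdiv.
  rewrite Rabs_mult, pow_1_abs, Rabs_inv, Rabs_pos_eq, Rmult_1_l by apply pos_INR.
  rewrite <- Rinv_1. apply Rinv_le_contravar; [lra|]. apply (le_INR 1). exact Hd.
Qed.

End RealBounds.

Definition A1_term (q : C) (n s : nat) : C := cpow q s / RtoC (INR s) * RtoC (A1 n s).
Definition A2_term (q : C) (n s : nat) : C := cpow q s * RtoC (A2 n s).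

Lemma A1_term_eq_A2_term (q : C) (n s : nat) : A1_term q n s = A2_term q n s.
Proof.
  unfold A1_term, A2_term. rewrite A1_eq_mul_A2.
  destruct (Nat.eq_dec s 0) as [->|Hs].
  - unfold A2, divsum. rewrite sum_O. simpl. rewrite Rmult_0_l. ring.
  - rewrite RtoC_mult. field. apply RtoC_neq0, not_0_INR, Hs.
Qed.

Lemma ex_series_A2_term (q : C) (n : nat) : (Cmod q < 1)%R -> ex_series (A2_term q n).
Proof.
  intro Hq. apply (ex_series_le (K := C_AbsRing) (V := C_CompleteNormedModule) _
                    (fun s => INR (S s) * Cmod q ^ s)%R).
  - intro s. change norm with Cmod. unfold A2_term.
    rewrite Cmod_mult, cpow_Cpow, Cmod_pow, Cmod_R, Rmult_comm.
    apply Rmult_le_compat_r; [apply pow_le, Cmod_ge_0 | apply Rabs_A2_le].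
  - apply ex_series_succ_pow. split; [apply Cmod_ge_0 | exact Hq].
Qed.

Lemma ex_series_A1_term (q : C) (n : nat) : (Cmod q < 1)%R -> ex_series (A1_term q n).
Proof.
  intro Hq. apply (ex_series_ext (A2_term q n)); [intro s; symmetry; apply A1_term_eq_A2_term|].
  now apply ex_series_A2_term.
Qed.

(* [- log (1 + q ^ j) = sum_K log_term q n j K] for [j > n]. *)
Definition log_term (q : C) (n j K : nat) : C :=
  if Nat.leb (S n) j then - (log1p_coef K * (q ^ j) ^ K) else 0.

Lemma A1_term_divisor_sum (q : C) (n s : nat) :
  A1_term q n s = sum_n (divisor_term (log_term q n) s) s.
Proof.
  unfold A1_term, A1, divsum. rewrite cpow_Cpow.
  assert (HRtoC : forall (f : nat -> R) m, RtoC (sum_n f m) = sum_n (fun d => RtoC (f d)) m).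
  { intros f m. induction m as [|m IH]; [now rewrite !sum_O|].
    rewrite !sum_Sn, <- IH. apply RtoC_plus. }
  rewrite HRtoC, <- (sum_n_mult_l (K := C_Ring)). apply sum_n_ext_loc. intros d Hd.
  match goal with |- ?a = ?b => change (@eq C a b) end. change mult with Cmult.
  unfold divisor_term, log_term.
  destruct (Nat.ltb_spec 0 d) as [Hd0|Hd0]; [|simpl; ring].
  destruct (Nat.eqb_spec (s mod d) 0) as [Hm|Hm]; [|simpl; ring]. cbn [andb].
  destruct (Nat.leb_spec (S n) d); [|ring].
  pose proof (Nat.div_mod s d ltac:(lia)) as Hsd. rewrite Hm, Nat.add_0_r in Hsd.
  set (K := (s / d)%nat) in *.
  destruct K as [|K]; [lia|].
  rewrite <- Cpow_mult_r, <- Hsd. cbn [log1p_coef].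
  replace (INR s) with (INR d * INR (S K))%R by (rewrite Hsd; symmetry; apply mult_INR).
  assert (INR d <> 0)%R by (apply not_0_INR; lia).
  assert (INR (S K) <> 0)%R by (apply not_0_INR; lia).
  replace ((-1) ^ S K * INR d)%R with (- ((-1) ^ K * INR d))%R by (simpl; ring).
  unfold Rdiv. rewrite RtoC_opp, !RtoC_mult, RtoC_inv by assumption.
  field. split; now apply RtoC_neq0.
Qed.

(** * The infinite product as an exponential *)

Lemma qpoch_S (a q : C) (m : nat) : qpoch a q (S m) = qpoch a q m * (1 - a * q ^ m).
Proof. simpl. now rewrite cpow_Cpow. Qed.

Lemma Cmod_pow_succ_lt1 (q : C) (k : nat) : (Cmod q < 1)%R -> (Cmod (q ^ S k) < 1)%R.
Proof.
  intro Hq. rewrite Cmod_pow. pose proof (Cmod_ge_0 q).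
  apply pow_lt_1_compat; [lra | lia].
Qed.

Lemma cexp_csum_clog1p (q : C) (n m : nat) : (Cmod q < 1)%R ->
  cexp (csum (fun i => clog1p (q ^ (S n + i))) m) = qpoch (- q ^ S n) q m.
Proof.
  intro Hq. induction m as [|m IH]; [apply cexp_0|]. cbn [csum].
  rewrite cexp_plus, IH, cexp_clog1p by (apply Cmod_pow_succ_lt1, Hq).
  rewrite qpoch_S, Cpow_add_r. ring.
Qed.

Lemma multiple_sum_log_term (q : C) (n N j : nat) :
  multiple_sum (log_term q n) N j = if Nat.leb (S n) j then - clog1p_sum (q ^ j) (N / j) else 0.
Proof.
  unfold multiple_sum, log_term, clog1p_sum.
  destruct (Nat.ltb_spec 0 j) as [Hj|Hj]; [|destruct (Nat.leb_spec (S n) j); [lia | reflexivity]].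
  generalize (N / j)%nat as M. intro M.
  destruct (Nat.leb (S n) j); induction M as [|M IH]; rewrite ?sum_O, ?sum_Sn, ?IH;
    change plus with Cplus; simpl; ring.
Qed.

(* Partial sums of [A1_term] are truncated logarithm series: grouping by [s = j K]. *)
Lemma sum_n_A1_term (q : C) (n m : nat) :
  sum_n (A1_term q n) (n + m) =
  - csum (fun i => clog1p_sum (q ^ (S n + i)) ((n + m) / (S n + i))) m.
Proof.
  rewrite (sum_n_ext _ _ _ (A1_term_divisor_sum q n)), sum_divisor_terms.
  rewrite (csum_ext _ (fun j => if Nat.leb (S n) j then - clog1p_sum (q ^ j) ((n + m) / j) else 0))
    by (intros; apply multiple_sum_log_term).
  rewrite (csum_from (fun j => - clog1p_sum (q ^ j) ((n + m) / j))). apply csum_opp.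
Qed.

Lemma clog1p_truncation_le (q : C) (n m i : nat) : (Cmod q < 1)%R ->
  (Cmod (clog1p (q ^ (S n + i)) - clog1p_sum (q ^ (S n + i)) ((n + m) / (S n + i)))
     <= Cmod q ^ S (n + m) / (1 - Cmod q))%R.
Proof.
  intro Hq. pose proof (Cmod_ge_0 q) as Hq0.
  set (j := (S n + i)%nat). set (M := ((n + m) / j)%nat).
  eapply Rle_trans; [apply clog1p_sum_tail; apply Cmod_pow_succ_lt1, Hq|].
  rewrite Cmod_pow, <- pow_mult.
  assert (Hexp : (S (n + m) <= j * S M)%nat).
  { pose proof (Nat.div_mod (n + m) j ltac:(unfold j; lia)) as Hdm.
    pose proof (Nat.mod_upper_bound (n + m) j ltac:(unfold j; lia)). fold M in Hdm. nia. }
  assert (Hqj : (Cmod q ^ j <= Cmod q)%R)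
    by (rewrite <- (pow_1 (Cmod q)) at 2; apply Rle_pow_decr; [lra | unfold j; lia]).
  unfold Rdiv. apply Rmult_le_compat.
  - apply pow_le. exact Hq0.
  - left. apply Rinv_0_lt_compat. pose proof (pow_le (Cmod q) j Hq0). lra.
  - apply Rle_pow_decr; [lra | exact Hexp].
  - apply Rinv_le_contravar; lra.
Qed.

(* The sum of the logarithms of the first [m] factors of [(-q^(n+1);q)_oo] differs from
   [- sum_(s <= n+m) A1_term q n s] by at most [m |q|^(n+m+1) / (1-|q|)]. *)
Lemma is_lim_csum_clog1p_A1_term (q : C) (n : nat) : (Cmod q < 1)%R ->
  is_lim_Cseq (fun m => csum (fun i => clog1p (q ^ (S n + i))) m + sum_n (A1_term q n) (n + m)) 0.
Proof.
  intro Hq. pose proof (Cmod_ge_0 q) as Hq0.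
  apply (is_lim_Cseq_bound _ _ (fun m => INR (S (m + S n)) * Cmod q ^ (m + S n) * / (1 - Cmod q))%R).
  - intro m. rewrite sum_n_A1_term.
    replace (csum (fun i => clog1p (q ^ (S n + i))) m
             + - csum (fun i => clog1p_sum (q ^ (S n + i)) ((n + m) / (S n + i))) m - 0)
      with (csum (fun i => clog1p (q ^ (S n + i))
                           - clog1p_sum (q ^ (S n + i)) ((n + m) / (S n + i))) m)
      by (rewrite csum_minus; ring).
    eapply Rle_trans; [apply Cmod_csum_le; intros i _; apply clog1p_truncation_le, Hq|].
    replace (m + S n)%nat with (S (n + m)) by lia.
    rewrite Rmult_assoc. apply Rmult_le_compat_r.
    + apply Rmult_le_pos; [apply pow_le; lra | left; apply Rinv_0_lt_compat; lra].
    + apply le_INR. lia.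
  - replace 0%R with (0 * / (1 - Cmod q))%R by ring.
    apply (is_lim_seq_scal_r _ _ 0%R), (is_lim_seq_incr_n (fun s => INR (S s) * Cmod q ^ s)%R).
    apply ex_series_lim_0, ex_series_succ_pow. lra.
Qed.

Lemma is_lim_qpoch_cexp (q : C) (n : nat) : (Cmod q < 1)%R ->
  is_lim_Cseq (qpoch (- q ^ S n) q) (cexp (- CSeries (A1_term q n))).
Proof.
  intro Hq.
  set (Lam := fun m => csum (fun i => clog1p (q ^ (S n + i))) m).
  assert (HLam : is_lim_Cseq Lam (- CSeries (A1_term q n))).
  { apply (is_lim_Cseq_ext
             (fun m => (Lam m + sum_n (A1_term q n) (n + m)) + - sum_n (A1_term q n) (m + n))).
    - intro m. rewrite Nat.add_comm. ring.
    - rewrite <- (Cplus_0_l (- CSeries (A1_term q n))).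
      apply is_lim_Cseq_plus; [exact (is_lim_csum_clog1p_A1_term q n Hq)|].
      apply is_lim_Cseq_opp, is_lim_Cseq_incr_n, CSeries_correct, ex_series_A1_term, Hq. }
  apply (is_lim_Cseq_ext (fun m => cpolar (Lam m))).
  - intro m. rewrite <- cexp_cpolar. apply cexp_csum_clog1p, Hq.
  - rewrite cexp_cpolar. apply is_lim_Cseq_cpolar, HLam.
Qed.

(** * The q-Pochhammer symbol [(-q;q)_n] and the series [f] *)

Lemma exp_le_compat (a b : R) : (a <= b)%R -> (exp a <= exp b)%R.
Proof. intros [Hab | ->]; [left; now apply exp_increasing | right; reflexivity]. Qed.

Lemma exp_neg_le_1_minus (x r : R) :
  (0 <= x <= r)%R -> (r < 1)%R -> (exp (- (x / (1 - r))) <= 1 - x)%R.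
Proof.
  intros Hx Hr.
  apply Rle_trans with (exp (- (x / (1 - x)))).
  { apply exp_le_compat, Ropp_le_contravar. unfold Rdiv.
    apply Rmult_le_compat_l; [lra|]. apply Rinv_le_contravar; lra. }
  pose proof (exp_ineq1_le (x / (1 - x))) as Hexp.
  replace (1 + x / (1 - x))%R with (/ (1 - x))%R in Hexp by (field; lra).
  rewrite exp_Ropp. pose proof (exp_pos (x / (1 - x))).
  apply (Rmult_le_reg_r (exp (x / (1 - x)))); [assumption|]. rewrite Rinv_l by lra.
  apply Rmult_le_compat_l with (r := (1 - x)%R) in Hexp; [|lra].
  rewrite Rinv_r in Hexp by lra. lra.
Qed.

Lemma Cmod_qpoch_ge (q : C) (n : nat) : (Cmod q < 1)%R ->
  (exp (- (Cmod q / (1 - Cmod q) ^ 2)) <= Cmod (qpoch (- q) q n))%R.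
Proof.
  intro Hq. pose proof (Cmod_ge_0 q) as Hq0. set (r := Cmod q) in *.
  assert (Hpartial :
    forall k, (exp (- (r * (1 - r ^ k) / (1 - r) ^ 2)) <= Cmod (qpoch (- q) q k))%R).
  { intro k. induction k as [|k IH].
    - simpl. rewrite Cmod_1.
      replace (r * (1 - 1) / ((1 - r) * ((1 - r) * 1)))%R with 0%R by (field; lra).
      rewrite Ropp_0, exp_0. lra.
    - rewrite qpoch_S, Cmod_mult.
      replace (1 - - q * q ^ k) with (1 + q ^ S k) by (rewrite Cpow_S; ring).
      assert (Hrn : (0 <= r ^ S k <= r)%R).
      { split; [now apply pow_le|]. rewrite <- (pow_1 r) at 2. apply Rle_pow_decr; [lra | lia]. }
      assert (Htri : (1 - r ^ S k <= Cmod (1 + q ^ S k))%R).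
      { pose proof (Cmod_triangle (1 + q ^ S k) (- q ^ S k)) as Ht.
        rewrite Cmod_opp, Cmod_pow in Ht. replace (1 + q ^ S k + - q ^ S k) with (RtoC 1) in Ht by ring.
        rewrite Cmod_1 in Ht. fold r in Ht. lra. }
      replace (- (r * (1 - r ^ S k) / (1 - r) ^ 2))%R
        with (- (r * (1 - r ^ k) / (1 - r) ^ 2) + - (r ^ S k / (1 - r)))%R by (simpl; field; lra).
      rewrite exp_plus. pose proof (exp_neg_le_1_minus _ _ Hrn Hq).
      apply Rmult_le_compat; try (left; apply exp_pos); lra. }
  eapply Rle_trans; [|apply Hpartial]. apply exp_le_compat, Ropp_le_contravar.
  unfold Rdiv. apply Rmult_le_compat_r; [left; apply Rinv_0_lt_compat, pow_lt; lra|].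
  pose proof (pow_le r n Hq0). nra.
Qed.

Lemma qpoch_neq0 (q : C) (n : nat) : (Cmod q < 1)%R -> qpoch (- q) q n <> 0.
Proof.
  intros Hq E. pose proof (Cmod_qpoch_ge q n Hq) as H. rewrite E, Cmod_0 in H.
  pose proof (exp_pos (- (Cmod q / (1 - Cmod q) ^ 2))). lra.
Qed.

Lemma qpoch_inv_sq (q : C) (n : nat) : q <> 0 ->
  qpoch (- / q) (/ q) n * qpoch (- / q) (/ q) n * q ^ (n * S n) = qpoch (- q) q n * qpoch (- q) q n.
Proof.
  intro Hq. induction n as [|n IH]; [simpl; ring|].
  rewrite !qpoch_S. replace (S n * S (S n))%nat with (n * S n + S n + S n)%nat by lia.
  rewrite !Cpow_add_r, Cpow_inv by exact Hq.
  pose proof (Cpow_nz q n Hq).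
  transitivity (qpoch (- / q) (/ q) n * qpoch (- / q) (/ q) n * q ^ (n * S n) *
                ((1 + / q * / q ^ n) * q ^ S n) * ((1 + / q * / q ^ n) * q ^ S n)); [ring|].
  rewrite IH, Cpow_S. field. auto.
Qed.

Lemma Cmod_qpoch_ratio_le (q : C) (k n : nat) : (Cmod q < 1)%R -> (n <= k)%nat ->
  (Cmod (cpow q k / (qpoch (- q) q n * qpoch (- q) q n))
     <= Cmod q ^ n / exp (- (Cmod q / (1 - Cmod q) ^ 2)) ^ 2)%R.
Proof.
  intros Hq Hnk. pose proof (qpoch_neq0 q n Hq) as HP. pose proof (Cmod_qpoch_ge q n Hq) as Hge.
  pose proof (exp_pos (- (Cmod q / (1 - Cmod q) ^ 2))) as Hc. pose proof (Cmod_ge_0 q).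
  set (c := exp (- (Cmod q / (1 - Cmod q) ^ 2))) in *.
  rewrite cpow_Cpow, Cmod_div, Cmod_mult, Cmod_pow by (apply Cmult_neq_0; assumption).
  unfold Rdiv. apply Rmult_le_compat.
  - apply pow_le. lra.
  - left. apply Rinv_0_lt_compat. apply Cmod_gt_0 in HP. nra.
  - apply Rle_pow_decr; [lra | exact Hnk].
  - simpl. rewrite Rmult_1_r. apply Rinv_le_contravar; [apply Rmult_lt_0_compat; lra|].
    apply Rmult_le_compat; lra.
Qed.

Lemma ex_series_qpoch_ratio (q : C) (k : nat -> nat) :
  (Cmod q < 1)%R -> (forall n, (n <= k n)%nat) ->
  ex_series (fun n => cpow q (k n) / (qpoch (- q) q n * qpoch (- q) q n)).
Proof.
  intros Hq Hk. set (c := exp (- (Cmod q / (1 - Cmod q) ^ 2))).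
  apply (ex_series_le (K := C_AbsRing) (V := C_CompleteNormedModule) _
           (fun n => / c ^ 2 * Cmod q ^ n)%R).
  - intro n. change norm with Cmod. rewrite Rmult_comm. apply Cmod_qpoch_ratio_le; auto.
  - apply (ex_series_scal_l (K := R_AbsRing) (V := R_NormedModule)).
    exists (/ (1 - Cmod q))%R. apply is_series_geom. rewrite Rabs_pos_eq; [exact Hq | apply Cmod_ge_0].
Qed.

Lemma f_term_inv (q : C) : q <> 0 -> (Cmod q < 1)%R ->
  f_term (/ q) = fun n => cpow q n / (qpoch (- q) q n * qpoch (- q) q n).
Proof.
  intros Hq0 Hq. apply functional_extensionality. intro n.
  unfold f_term. rewrite (cpow_Cpow (/ q)), (cpow_Cpow q n), Cpow_inv by exact Hq0.
  pose proof (qpoch_neq0 q n Hq) as HP.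
  pose proof (qpoch_inv_sq q n Hq0) as E.
  set (Q := qpoch (- / q) (/ q) n) in *.
  assert (HQ : Q <> 0).
  { intro HQ. rewrite HQ in E. apply (Cmult_neq_0 _ _ HP HP). rewrite <- E. ring. }
  replace (n * S n)%nat with (n * n + n)%nat in E by lia.
  rewrite Cpow_add_r in E. rewrite <- E.
  pose proof (Cpow_nz q (n * n) Hq0). pose proof (Cpow_nz q n Hq0).
  field. auto.
Qed.

Lemma ex_series_f_term (q : C) : Cmod q <> 1%R -> ex_series (f_term q).
Proof.
  intro Hq1. destruct (Rlt_or_le (Cmod q) 1) as [Hlt|Hge].
  - apply (ex_series_qpoch_ratio q (fun n => n * n)%nat Hlt). intro n. nia.
  - assert (Hq0 : q <> 0) by (intro E; rewrite E, Cmod_0 in Hge; lra).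
    assert (Hp : (Cmod (/ q) < 1)%R).
    { rewrite Cmod_inv by exact Hq0. rewrite <- Rinv_1. apply Rinv_lt_contravar; lra. }
    assert (Hp0 : / q <> 0).
    { apply Cmod_gt_0. rewrite Cmod_inv by exact Hq0. apply Rinv_0_lt_compat. lra. }
    replace q with (/ / q) by (field; exact Hq0).
    rewrite f_term_inv by assumption.
    apply (ex_series_qpoch_ratio (/ q) (fun n => n) Hp). auto.
Qed.

Lemma is_series_f_term (q : C) : (Cmod q < 1)%R -> is_series (f_term q) (fser q).
Proof. intro Hq. apply CSeries_correct, ex_series_f_term. lra. Qed.

Lemma is_series_fser_inv (q : C) : (0 < Cmod q < 1)%R ->
  is_series (fun n => cpow q n / (qpoch (- q) q n * qpoch (- q) q n)) (fser (/ q)).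
Proof.
  intro Hq. assert (Hq0 : q <> 0) by (apply Cmod_gt_0; lra).
  unfold fser. rewrite f_term_inv by (exact Hq0 || lra).
  apply CSeries_correct, (ex_series_qpoch_ratio q (fun n => n)); [lra | auto].
Qed.

Lemma qpoch_add (q : C) (n m : nat) :
  qpoch (- q) q (n + m) = qpoch (- q) q n * qpoch (- q ^ S n) q m.
Proof.
  induction m as [|m IH]; [rewrite Nat.add_0_r; simpl; ring|].
  rewrite Nat.add_succ_r, !qpoch_S, IH, Cpow_add_r, (Cpow_S q n). ring.
Qed.

Lemma qpoch_inf_cexp (q : C) (n : nat) : (Cmod q < 1)%R ->
  qpoch_inf (- q ^ S n) q = cexp (- CSeries (A1_term q n)).
Proof. intro Hq. apply CLim_unique, is_lim_qpoch_cexp, Hq. Qed.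

Lemma chi_factor (q : C) (n : nat) : (Cmod q < 1)%R ->
  chi q = qpoch (- q) q n * qpoch_inf (- q ^ S n) q.
Proof.
  intro Hq.
  assert (Hchi : is_lim_Cseq (qpoch (- q) q) (cexp (- CSeries (A1_term q 0))))
    by (rewrite <- (Cpow_1_r q) at 1; apply is_lim_qpoch_cexp, Hq).
  unfold chi, qpoch_inf. rewrite (CLim_unique _ _ Hchi). fold (qpoch_inf (- q ^ S n) q).
  rewrite qpoch_inf_cexp by exact Hq.
  apply (is_lim_Cseq_unique (fun m => qpoch (- q) q (m + n))); [now apply is_lim_Cseq_incr_n|].
  apply (is_lim_Cseq_ext (fun m => qpoch (- q) q n * qpoch (- q ^ S n) q m));
    [intro m; now rewrite Nat.add_comm, qpoch_add|].
  apply is_lim_Cseq_mult; [apply is_lim_Cseq_const | apply is_lim_qpoch_cexp, Hq].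
Qed.

Lemma qpoch_inf_sq (q : C) (n : nat) : (Cmod q < 1)%R ->
  qpoch_inf (- cpow q (S n)) q * qpoch_inf (- cpow q (S n)) q
  = chi q * chi q / (qpoch (- q) q n * qpoch (- q) q n).
Proof.
  intro Hq. rewrite cpow_Cpow, (chi_factor q n Hq). field. apply qpoch_neq0, Hq.
Qed.

Lemma cexp_A1_series (q : C) (n : nat) : (Cmod q < 1)%R ->
  cexp (- 2 * CSeries (A1_term q n)) = chi q * chi q / (qpoch (- q) q n * qpoch (- q) q n).
Proof.
  intro Hq. rewrite <- qpoch_inf_sq, cpow_Cpow, qpoch_inf_cexp, <- cexp_plus by exact Hq.
  f_equal. ring.
Qed.

Lemma cexp_A2_series (q : C) (n : nat) : (Cmod q < 1)%R ->
  cexp (- 2 * CSeries (A2_term q n)) = chi q * chi q / (qpoch (- q) q n * qpoch (- q) q n).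
Proof.
  intro Hq. rewrite <- cexp_A1_series by exact Hq. do 3 f_equal.
  apply functional_extensionality. intro s. symmetry. apply A1_term_eq_A2_term.
Qed.

Lemma is_series_Cscal_r (a b : nat -> C) (c l : C) :
  is_series a l -> (forall n, b n = c * a n) -> is_series b (l * c).
Proof.
  intros Ha Hb. rewrite Cmult_comm. apply (is_series_ext (fun n => c * a n)).
  - intro n. symmetry. apply Hb.
  - apply is_series_Cscal, Ha.
Qed.

Theorem theorem2 :
  (forall q : C, Cmod q <> 1%R -> ex_series (f_term q)) /\
  (forall q : C, (0 < Cmod q < 1)%R ->
     is_series (fun n => cpow q (n * n)%nat / (qpoch (- q) q n * qpoch (- q) q n)) (fser q) /\
     is_series (fun n => cpow q n / (qpoch (- q) q n * qpoch (- q) q n)) (fser (/ q)) /\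
     is_series (fun n => qpoch_inf (- cpow q (S n)%nat) q * qpoch_inf (- cpow q (S n)%nat) q
                         * cpow q (n * n)%nat)
               (fser q * (chi q * chi q)) /\
     is_series (fun n => qpoch_inf (- cpow q (S n)%nat) q * qpoch_inf (- cpow q (S n)%nat) q
                         * cpow q n)
               (fser (/ q) * (chi q * chi q)) /\
     (forall n : nat, ex_series (fun s => (cpow q s / RtoC (INR s)) * RtoC (A1 n s))) /\
     (forall n : nat, ex_series (fun s => cpow q s * RtoC (A2 n s))) /\
     is_series (fun n => cpow q (n * n)%nat *
             cexp (- 2 * CSeries (fun s => (cpow q s / RtoC (INR s)) * RtoC (A1 n s))))
               (fser q * (chi q * chi q)) /\
     is_series (fun n => cpow q (n * n)%nat *
             cexp (- 2 * CSeries (fun s => cpow q s * RtoC (A2 n s))))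
               (fser q * (chi q * chi q)) /\
     is_series (fun n => cpow q n *
             cexp (- 2 * CSeries (fun s => cpow q s * RtoC (A2 n s))))
               (fser (/ q) * (chi q * chi q))).
Proof.
  split; [exact ex_series_f_term|]. intros q Hq.
  assert (Hq1 : (Cmod q < 1)%R) by lra.
  pose proof (is_series_f_term q Hq1) as Hf.
  pose proof (is_series_fser_inv q Hq) as Hfinv.
  split; [exact Hf|]. split; [exact Hfinv|].
  split; [apply (is_series_Cscal_r _ _ _ _ Hf); intro n;
          rewrite qpoch_inf_sq by exact Hq1; unfold f_term, Cdiv; ring|].
  split; [apply (is_series_Cscal_r _ _ _ _ Hfinv); intro n;
          rewrite qpoch_inf_sq by exact Hq1; unfold Cdiv; ring|].
  split; [intro n; apply ex_series_A1_term, Hq1|].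
  split; [intro n; apply ex_series_A2_term, Hq1|].
  split; [apply (is_series_Cscal_r _ _ _ _ Hf); intro n;
          fold (A1_term q n); rewrite cexp_A1_series by exact Hq1; unfold f_term, Cdiv; ring|].
  split; [apply (is_series_Cscal_r _ _ _ _ Hf); intro n;
          fold (A2_term q n); rewrite cexp_A2_series by exact Hq1; unfold f_term, Cdiv; ring|].
  apply (is_series_Cscal_r _ _ _ _ Hfinv). intro n.
  fold (A2_term q n). rewrite cexp_A2_series by exact Hq1. unfold Cdiv. ring.
Qed.
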